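(* Let $A$ be a sub-tree of $T$, let $S_1,S_2\subseteq V_A$ and let $x\in[0,d(r_A)]$. Then $$G(S_1,x)+G(S_2,x)\le G(S_1\cup S_2,x)+G(S_1\cap S_2,x).$$
   Context: Setting. $T$ is a finite tree rooted at $r_T$, node set $V_T$; every edge $e$ has weight $w_e\ge 0$. Every node $v$ has a probability $\pi_v\in(0,1]$ and a prize $p_v\in\mathbb{R}$. $d(v)$ is the total weight of the path from $r_T$ to $v$. A random set $\omega\subseteq V_T$ contains each node $v$ independently with probability $\pi_v$. For $S\subseteq V_T$, $P(S)=1-\prod_{s\in S}(1-\pi_s)$ ($P(\emptyset)=0$). For a node $a$, the sub-tree $A$ rooted at $r_A=a$ consists of $a$ and all its descendants, with node set $V_A$. For $Q\subseteq V_T$, $W(Q)$ is the total weight of the edges lying on at least one path from $r_T$ to a node of $Q$. For $S\subseteq V_A$ and $x\le d(r_A)$ the expected profit is $G(S,x)=\sum_{s\in S}p_s\pi_s-\mathbb{E}[W(S\cap\omega)]+x\,P(S)$. *)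

From HB Require Import structures.
From mathcomp Require Import all_boot all_order all_algebra.
Set Implicit Arguments. Unset Strict Implicit. Unset Printing Implicit Defensive.
Import Order.TTheory GRing.Theory Num.Theory.
Local Open Scope ring_scope.

(* The edge between [par v] and [v] (v <> r)
   is identified with the child node [v]; its weight is [w v]. *)
Definition is_rooted_tree (V : finType) (r : V) (par : V -> V) : Prop :=
  par r = r /\ forall v : V, exists k : nat, iter k par v = r.

(* [anc par u v] : u lies on the path from the root to v (u = v allowed). *)
Definition anc (V : finType) (par : V -> V) (u v : V) : bool :=
  [exists k : 'I_#|V|.+1, iter k par v == u].

Definition subtree (V : finType) (par : V -> V) (a : V) : {set V} :=
  [set v | anc par a v].

Definition dist (R : numDomainType) (V : finType) (r : V) (par : V -> V)
  (w : V -> R) (v : V) : R :=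
  \sum_(u | (u != r) && anc par u v) w u.

Definition Wt (R : numDomainType) (V : finType) (r : V) (par : V -> V)
  (w : V -> R) (Q : {set V}) : R :=
  \sum_(u | (u != r) && [exists q in Q, anc par u q]) w u.

(* Probability that the random set omega equals the set [om]. *)
Definition prob_set (R : numDomainType) (V : finType) (pi : V -> R)
  (om : {set V}) : R :=
  (\prod_(v in om) pi v) * (\prod_(v in ~: om) (1 - pi v)).

Definition EW (R : numDomainType) (V : finType) (r : V) (par : V -> V)
  (w : V -> R) (pi : V -> R) (S : {set V}) : R :=
  \sum_(om : {set V}) prob_set pi om * Wt r par w (S :&: om).

Definition Pr (R : numDomainType) (V : finType) (pi : V -> R) (S : {set V}) : R :=
  1 - \prod_(s in S) (1 - pi s).

Definition G (R : numDomainType) (V : finType) (r : V) (par : V -> V)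
  (w pi p : V -> R) (S : {set V}) (x : R) : R :=
  \sum_(s in S) p s * pi s - EW r par w pi S + x * Pr pi S.

From HB Require Import structures.
From mathcomp Require Import all_boot all_order all_algebra.
From mathcomp Require Import ring.
Import Order.TTheory GRing.Theory Num.Theory.
Set Implicit Arguments. Unset Strict Implicit.
Local Open Scope ring_scope.

(* The edge above u lies on a root-to-q path for some q in T exactly when T
   meets the subtree of u, so W(T) is a nonnegative combination of the
   submodular set functions T |-> [T meets B].  For T inside the subtree of a,
   every edge above a is used as soon as T is nonempty, so
   W(T) - x [T <> 0] = (d(a) - x) [T <> 0] + sum_{u not above a} w_u [T meets subtree u],
   which is submodular when x <= d(a).  Averaging over the product measure of
   the random set omega (with T = S :&: omega) gives submodularity of
   E[W(S :&: omega)] - x P(S), while the prize term is modular. *)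

Lemma anc_fconnect (V : finType) (par : V -> V) u v :
  anc par u v = fconnect par v u.
Proof.
apply/existsP/idP => [[k /eqP <-]|vu]; first exact: fconnect_iter.
have k_lt : (findex par v u < #|V|.+1)%N.
  exact: leq_trans (findex_max vu) (leqW (max_card _)).
by exists (Ordinal k_lt); rewrite /= iter_findex.
Qed.

Lemma anc_trans (V : finType) (par : V -> V) u v z :
  anc par u v -> anc par v z -> anc par u z.
Proof. by rewrite !anc_fconnect => uv vz; apply: connect_trans vz uv. Qed.

Lemma subtree_anc (V : finType) (par : V -> V) u a :
  anc par u a -> subtree par a \subset subtree par u.
Proof. by move=> ua; apply/subsetP => v; rewrite !inE; apply: anc_trans. Qed.

Lemma setI_subtree_neq0 (V : finType) (par : V -> V) (T : {set V}) u :
  (T :&: subtree par u != set0) = [exists q in T, anc par u q].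
Proof.
apply/set0Pn/existsP => [[q]|[q /andP[qT uq]]]; first by rewrite !inE; exists q.
by exists q; rewrite !inE qT.
Qed.

Section Submodular.
Variables (R : realDomainType) (V : finType).
Implicit Types (U B T : {set V}) (f g : {set V} -> R).

Definition submodular_on U f := forall T1 T2, T1 \subset U -> T2 \subset U ->
  f (T1 :|: T2) + f (T1 :&: T2) <= f T1 + f T2.

Lemma submodular_meets U B : submodular_on U (fun T => (T :&: B != set0)%:R).
Proof.
move=> T1 T2 _ _; rewrite setIUl setU_eq0 negb_and.
have IB_sub1 : T1 :&: T2 :&: B \subset T1 :&: B by rewrite setSI ?subsetIl.
have IB_sub2 : T1 :&: T2 :&: B \subset T2 :&: B by rewrite setSI ?subsetIr.
case: (boolP (T1 :&: T2 :&: B != set0)) => [IB|_].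
  by rewrite (subset_neq0 IB_sub1 IB) (subset_neq0 IB_sub2 IB).
by case: (_ != set0); case: (_ != set0); rewrite /= ?addr0 ?add0r ?lerDl.
Qed.

Lemma submodularD U f g :
  submodular_on U f -> submodular_on U g -> submodular_on U (fun T => f T + g T).
Proof.
move=> subf subg T1 T2 T1U T2U.
by rewrite addrACA [leRHS]addrACA lerD ?subf ?subg.
Qed.

Lemma submodularZ U c f :
  0 <= c -> submodular_on U f -> submodular_on U (fun T => c * f T).
Proof. by move=> c0 subf T1 T2 T1U T2U; rewrite -!mulrDr ler_wpM2l ?subf. Qed.

Lemma submodular_sum (I : finType) (P : pred I) U (F : I -> {set V} -> R) :
  (forall i, submodular_on U (F i)) ->
  submodular_on U (fun T => \sum_(i | P i) F i T).
Proof.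
move=> subF T1 T2 T1U T2U; rewrite -!big_split /=.
by apply: ler_sum => i _; apply: subF.
Qed.

Lemma submodular_on_eq U f g :
  (forall T, T \subset U -> f T = g T) -> submodular_on U g -> submodular_on U f.
Proof.
move=> fg subg T1 T2 T1U T2U.
have UU : T1 :|: T2 \subset U by rewrite subUset T1U.
have IU : T1 :&: T2 \subset U by rewrite (subset_trans (subsetIl _ _)).
by rewrite !fg ?subg.
Qed.

End Submodular.

Section RandomSet.
Variables (R : realDomainType) (V : finType) (pi : V -> R).
Hypothesis pi01 : forall v, 0 <= pi v <= 1.

Lemma sum_set_prod (g : V -> bool -> R) :
  \sum_(om : {set V}) \prod_v g v (v \in om) = \prod_v (g v true + g v false).
Proof.
under [RHS]eq_bigr => v _ do rewrite -big_bool.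
rewrite bigA_distr_bigA /= (reindex (fun f : {ffun V -> bool} => [set v | f v])).
  by apply: eq_bigr => f _; apply: eq_bigr => v _; rewrite inE.
exists (fun A : {set V} => [ffun v => v \in A]) => [f _|A _].
  by apply/ffunP => v; rewrite ffunE inE.
by apply/setP => v; rewrite inE ffunE.
Qed.

Lemma prob_setE om :
  prob_set pi om = \prod_v (if v \in om then pi v else 1 - pi v).
Proof.
rewrite /prob_set (big_mkcond (fun v => v \in om)) (big_mkcond (fun v => v \in ~: om)).
rewrite -big_split /=.
by apply: eq_bigr => v _; rewrite inE; case: (v \in om); rewrite ?mulr1 ?mul1r.
Qed.

Lemma prob_set_ge0 om : 0 <= prob_set pi om.
Proof.
rewrite prob_setE; apply: prodr_ge0 => v _.
by have /andP[? ?] := pi01 v; case: (v \in om); rewrite ?subr_ge0.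
Qed.

Lemma sum_prob_set : \sum_om prob_set pi om = 1.
Proof.
under eq_bigr => om _ do rewrite prob_setE.
by rewrite (sum_set_prod (fun v b => if b then pi v else 1 - pi v)) big1 // => v _; rewrite subrKC.
Qed.

Lemma prob_setI_eq0 S :
  \sum_om prob_set pi om * (S :&: om == set0)%:R = \prod_(v in S) (1 - pi v).
Proof.
pose g v (b : bool) := if b then (if v \in S then 0 else pi v) else 1 - pi v.
transitivity (\sum_(om : {set V}) \prod_v g v (v \in om)).
  apply: eq_bigr => om _; rewrite prob_setE.
  case: eqP => [Som0|/eqP/set0Pn [v]]; rewrite ?mulr1 ?mulr0.
    apply: eq_bigr => v _; rewrite /g; case vom: (v \in om) => //.
    by case vS: (v \in S) => //; move/setP/(_ v): Som0; rewrite !inE vS vom.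
  by rewrite inE => /andP[vS vom]; rewrite (bigD1 v) //= /g vom vS mul0r.
rewrite sum_set_prod [RHS]big_mkcond; apply: eq_bigr => v _; rewrite /g.
by case: (v \in S); rewrite ?add0r // subrKC.
Qed.

Lemma PrE S : Pr pi S = \sum_om prob_set pi om * (S :&: om != set0)%:R.
Proof.
rewrite /Pr -prob_setI_eq0 -[X in X - _]sum_prob_set -sumrB.
by apply: eq_bigr => om _; case: eqP; rewrite ?mulr0 ?mulr1 ?subr0 ?subrr.
Qed.

Lemma submodular_expect (U : {set V}) (f : {set V} -> R) :
  submodular_on U f ->
  submodular_on U (fun S => \sum_om prob_set pi om * f (S :&: om)).
Proof.
move=> subf S1 S2 S1U S2U; rewrite -!big_split /=.
apply: ler_sum => om _; rewrite -!mulrDr ler_wpM2l ?prob_set_ge0 //.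
by rewrite setIUl setIIl subf // (subset_trans (subsetIl _ _)).
Qed.

End RandomSet.

Section TreeWeight.
Variables (R : realDomainType) (V : finType) (r : V) (par : V -> V) (w : V -> R).
Hypothesis w_ge0 : forall v, 0 <= w v.
Implicit Types T : {set V}.

Lemma WtE T :
  Wt r par w T = \sum_(u | u != r) w u * (T :&: subtree par u != set0)%:R.
Proof.
rewrite /Wt big_mkcondr /=; apply: eq_bigr => u _.
by rewrite setI_subtree_neq0; case: ifP; rewrite ?mulr1 ?mulr0.
Qed.

Lemma Wt_subtreeE a T : T \subset subtree par a ->
  Wt r par w T = dist r par w a * (T != set0)%:R +
    \sum_(u | (u != r) && ~~ anc par u a) w u * (T :&: subtree par u != set0)%:R.
Proof.
move=> Ta; rewrite WtE (bigID (anc par ^~ a)) /= /dist mulr_suml.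
congr (_ + _); apply: eq_bigr => u /andP[_ ua].
by rewrite (setIidPl (subset_trans Ta (subtree_anc ua))).
Qed.

Lemma submodular_Wt_sub a x : x <= dist r par w a ->
  submodular_on (subtree par a) (fun T => Wt r par w T - x * (T != set0)%:R).
Proof.
move=> x_le; apply: submodular_on_eq (_ : submodular_on _
  (fun T => (dist r par w a - x) * (T :&: setT != set0)%:R +
    \sum_(u | (u != r) && ~~ anc par u a)
       w u * (T :&: subtree par u != set0)%:R)) => [T Ta|].
  by rewrite (Wt_subtreeE Ta) setIT; ring.
apply: submodularD.
  by apply: submodularZ; [rewrite subr_ge0 | apply: submodular_meets].
apply: submodular_sum => u.
by apply: submodularZ; [apply: w_ge0 | apply: submodular_meets].
Qed.

End TreeWeight.

Lemma sum_setU_setI (R : nmodType) (V : finType) (F : V -> R) (A B : {set V}) :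
  \sum_(v in A :|: B) F v + \sum_(v in A :&: B) F v =
  \sum_(v in A) F v + \sum_(v in B) F v.
Proof.
rewrite !(big_mkcond (fun v => v \in _)) -!big_split /=; apply: eq_bigr => v _; rewrite !inE.
by case: (v \in A); case: (v \in B); rewrite ?addr0 ?add0r.
Qed.

Theorem proposition2 (R : realFieldType) (V : finType) (r : V) (par : V -> V)
  (w pi p : V -> R)
  (Htree : is_rooted_tree r par)
  (Hw : forall v, 0 <= w v)
  (Hpi : forall v, 0 < pi v <= 1)
  (a : V) (S1 S2 : {set V}) (x : R)
  (HS1 : S1 \subset subtree par a) (HS2 : S2 \subset subtree par a)
  (Hx0 : 0 <= x) (Hx1 : x <= dist r par w a) :
  G r par w pi p S1 x + G r par w pi p S2 x <=
  G r par w pi p (S1 :|: S2) x + G r par w pi p (S1 :&: S2) x.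
Proof.
have pi01 v : 0 <= pi v <= 1 by have /andP[/ltW -> ->] := Hpi v.
pose loss S := \sum_om prob_set pi om *
  (Wt r par w (S :&: om) - x * (S :&: om != set0)%:R).
have GE S : G r par w pi p S x = \sum_(s in S) p s * pi s - loss S.
  rewrite /G /EW (PrE pi) /loss mulr_sumr -addrA -!sumrN -big_split /=.
  by congr (_ + _); apply: eq_bigr => om _; ring.
have loss_sub := submodular_expect pi01 (submodular_Wt_sub Hw Hx1) HS1 HS2.
rewrite !GE addrACA [leRHS]addrACA sum_setU_setI lerD2l -!opprD lerN2.
exact: loss_sub.
Qed.
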